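(* Let $p\ge1$, $n,K\in\mathbb{N}$, $\Omega\subseteq\mathbb{R}^d$ compact and $z\in\mathbb{R}^d\setminus\Omega$. Let $f$ be a depth-$K$ MPNN on $G_{\le n}(\Omega)$ whose aggregation functions $\phi^{(k)}$, combine functions $\psi^{(k)}$ and readout are jointly continuous in their inputs and parameters, with parameters ranging over compact sets. For $0\le k\le K$ let $\Omega_k$ be the set of all feature vectors $x_v^{(k)}$ attainable after $k$ message passing layers, over all graphs in $G_{\le n}(\Omega)$, all nodes and all parameter choices, and let $z_k\notin\Omega_k$. Then for each $k$ there exist constants $C\ge c>0$ such that for every $G\in G_{\le n}(\Omega)$, every $v\in V_G$ and every parameter choice, $$C\cdot TD\big(T_v^{(k)},\bar T_z\big)\ \ge\ \|z_k-x_v^{(k)}\|_p\ \ge\ c\cdot TD\big(T_v^{(k)},\bar T_z\big).$$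
   Context: $G_{\le n}(\Omega)$ is the set of graphs $G=(V,E,X)$ with $|V|\le n$ and node features $x_v\in\Omega$; $\mathcal N_v$ is the multiset of neighbors of $v$. An MPNN of depth $K$ computes $x_v^{(0)}=x_v$ and, for $k=1,\dots,K$, $c_v^{(k)}=\phi^{(k)}(\{\!\!\{ x_u^{(k-1)}:u\in\mathcal N_v\}\!\!\})$, $x_v^{(k)}=\psi^{(k)}(x_v^{(k-1)},c_v^{(k)})$, and outputs $\upsilon(\{\!\!\{ x_v^{(K)}:v\in V\}\!\!\})$. Computation trees: $T_v^{(0)}$ is a single root node with feature $x_v$; $T_v^{(k)}$ is obtained from $T_v^{(k-1)}$ by attaching to each leaf (corresponding to a graph node $u$) children corresponding to the neighbors of $u$ in $G$, each carrying its feature from $G$. The blank tree $\bar T_z$ is a single node with feature $z$. For a rooted tree $T$ with root $r$, $\mathcal T_r$ is the multiset of subtrees rooted at the children of $r$. For multisets of trees $A,B$ of size at most $n$, $W^{(\bar T_z)}_{TD,1}(A,B)=\min_{\tau\in S_n}\sum_{j=1}^n TD(A'_j,B'_{\tau(j)})$ where $A',B'$ are $A,B$ padded with copies of $\bar T_z$ to exactly $n$ elements. The tree distance is defined recursively: $TD(T_a,T_b)=\|x_a-x_b\|_p+W^{(\bar T_z)}_{TD,1}(\mathcal T_a,\mathcal T_b)$ if the maximal depth of $T_a,T_b$ is positive, and $TD(T_a,T_b)=\|x_a-x_b\|_p$ otherwise, where $x_a,x_b$ are the root features. *)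

From HB Require Import structures.
From mathcomp Require Import all_boot all_order all_algebra all_fingroup.
From mathcomp Require Import all_classical all_reals all_analysis.
Set Implicit Arguments. Unset Strict Implicit. Unset Printing Implicit Defensive.
Import Order.TTheory GRing.Theory Num.Theory.
Import numFieldNormedType.Exports.
Local Open Scope classical_set_scope.
Local Open Scope ring_scope.

Section Defs.
Variable R : realType.

Definition pnorm (p : R) (m : nat) (x : 'rV[R]_m) : R :=
  (\sum_(i < m) `|x ord0 i| `^ p) `^ p^-1.

Definition graph_ok (n : nat) (d : nat) (Omega : set 'rV[R]_d)
  (m : nat) (adj : rel 'I_m) (X : 'I_m -> 'rV[R]_d) : Prop :=
  [/\ (m <= n)%N, (forall u v, adj u v = adj v u), (forall v, ~~ adj v v)
    & (forall v, Omega (X v))].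

(** Neighbours of v, in enumeration order (a representative of the multiset). *)
Definition nbrs (m : nat) (adj : rel 'I_m) (v : 'I_m) : seq 'I_m :=
  [seq u <- enum 'I_m | adj v u].

Fixpoint feat (dim pd cd : nat -> nat)
  (phi : forall k, 'rV[R]_(pd k) -> seq 'rV[R]_(dim k) -> 'rV[R]_(cd k))
  (psi : forall k, 'rV[R]_(pd k) -> 'rV[R]_(dim k) -> 'rV[R]_(cd k) -> 'rV[R]_(dim k.+1))
  (theta : forall k, 'rV[R]_(pd k))
  (m : nat) (adj : rel 'I_m) (X : 'I_m -> 'rV[R]_(dim 0%N)) (k : nat)
  : 'I_m -> 'rV[R]_(dim k) :=
  match k return 'I_m -> 'rV[R]_(dim k) with
  | 0%N => X
  | k'.+1 => fun v =>
      psi k' (theta k') (feat phi psi theta adj X k' v)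
        (phi k' (theta k') [seq feat phi psi theta adj X k' u | u <- nbrs adj v])
  end.

Definition params_ok (K : nat) (pd : nat -> nat) (Theta : forall k, set 'rV[R]_(pd k))
  (theta : forall k, 'rV[R]_(pd k)) : Prop :=
  forall j, (j < K)%N -> Theta j (theta j).

Definition attainable (n K : nat) (dim pd cd : nat -> nat)
  (Omega : set 'rV[R]_(dim 0%N))
  (phi : forall k, 'rV[R]_(pd k) -> seq 'rV[R]_(dim k) -> 'rV[R]_(cd k))
  (psi : forall k, 'rV[R]_(pd k) -> 'rV[R]_(dim k) -> 'rV[R]_(cd k) -> 'rV[R]_(dim k.+1))
  (Theta : forall k, set 'rV[R]_(pd k)) (k : nat) : set 'rV[R]_(dim k) :=
  [set x | exists (m : nat) (adj : rel 'I_m) (X : 'I_m -> 'rV[R]_(dim 0%N))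
             (v : 'I_m) (theta : forall j, 'rV[R]_(pd j)),
     [/\ graph_ok n Omega adj X, params_ok K Theta theta
       & x = feat phi psi theta adj X k v]].

(** A function of multisets represented on sequences: invariant under permutation. *)
Definition multiset_fun (A B C : eqType) (f : A -> seq B -> C) : Prop :=
  forall a s t, perm_eq s t -> f a s = f a t.

Definition rows_of (m d : nat) (M : 'M[R]_(m, d)) : seq 'rV[R]_d :=
  [seq row i M | i <- enum 'I_m].

End Defs.
Arguments attainable [R] n K [dim pd cd] Omega phi psi Theta k _.

(** Rooted trees with labels in T (children as a list, read as a multiset). *)
Inductive ftree (T : Type) := FNode of T & seq (ftree T).
Arguments FNode {T}.

Definition root_lbl T (t : ftree T) : T := let: FNode x _ := t in x.
Definition children T (t : ftree T) : seq (ftree T) := let: FNode _ c := t in c.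

Fixpoint depth T (t : ftree T) : nat :=
  match t with
  | FNode _ [::] => 0%N
  | FNode _ ch => (foldr maxn 0%N (map (@depth T) ch)).+1
  end.

Fixpoint tmap T U (f : T -> U) (t : ftree T) : ftree U :=
  match t with FNode x ch => FNode (f x) (map (tmap f) ch) end.

(** One step of computation-tree growth: attach to every leaf (graph node u)
    children corresponding to the neighbours of u. *)
Fixpoint grow (m : nat) (adj : rel 'I_m) (t : ftree 'I_m) : ftree 'I_m :=
  match t with
  | FNode u [::] => FNode u [seq FNode w [::] | w <- nbrs adj u]
  | FNode u ch => FNode u (map (grow adj) ch)
  end.

Definition comp_tree (m d : nat) (R : Type) (adj : rel 'I_m) (X : 'I_m -> 'rV[R]_d)
  (k : nat) (v : 'I_m) : ftree 'rV[R]_d :=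
  tmap X (iter k (grow adj) (FNode v [::])).

Section TreeDist.
Variable R : realType.
Local Open Scope ring_scope.

Definition blank_tree (d : nat) (z : 'rV[R]_d) : ftree 'rV[R]_d := FNode z [::].

(** W^{(blank z)}_{TD,1}(A,B): pad A, B with blank trees to n elements,
    minimise over tau in S_n the sum of TD(A'_j, B'_{tau j}). *)
Definition Wdist (n d : nat) (z : 'rV[R]_d)
  (TD : ftree 'rV[R]_d -> ftree 'rV[R]_d -> R) (A B : seq (ftree 'rV[R]_d)) : R :=
  let S (tau : 'S_n) := \sum_(j < n) TD (nth (blank_tree z) A j)
                                       (nth (blank_tree z) B (tau j)) in
  \big[Num.min/ S 1%g]_(tau : 'S_n) S tau.

(** Tree distance with fuel f (f >= max depth gives the recursive definition). *)
Fixpoint TDf (p : R) (n d : nat) (z : 'rV[R]_d) (f : nat)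
  (a b : ftree 'rV[R]_d) : R :=
  match f with
  | 0%N => pnorm p (root_lbl a - root_lbl b)
  | f'.+1 =>
      if (0 < maxn (depth a) (depth b))%N
      then pnorm p (root_lbl a - root_lbl b)
           + Wdist n z (TDf p n z f') (children a) (children b)
      else pnorm p (root_lbl a - root_lbl b)
  end.

Definition TD (p : R) (n d : nat) (z : 'rV[R]_d) (a b : ftree 'rV[R]_d) : R :=
  TDf p n z (maxn (depth a) (depth b)) a b.

End TreeDist.

From HB Require Import structures.
From mathcomp Require Import all_boot all_order all_algebra all_fingroup.
From mathcomp Require Import all_classical all_reals all_analysis.
Import Order.TTheory GRing.Theory Num.Theory.
Import numFieldNormedType.Exports.
Local Open Scope classical_set_scope.
Local Open Scope ring_scope.

(* Both sides are bounded above and away from zero, uniformly in the graph, the node and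
   the parameters.  For a fixed graph the matrix of layer-(k+1) features is a continuous
   image of (layer-k parameters) x (layer-k feature matrices), and graphs with at most n
   nodes are finitely many, so the set Omega_k of attainable features is compact; as z_k
   is not in it, ||z_k - x_v^(k)||_p stays in some [e1, U1] with e1 > 0.  The tree
   distance TD(T_v^(k), blank z) is at least its root term ||x_v - z||_p >= e2 > 0, since
   Omega is compact and misses z; bounding W by the identity matching gives
   TD <= B_k with B_0 = M, B_(k+1) = M + n B_k, where M bounds ||x - z||_p on Omega.
   Hence C = U1 / e2 and c = e1 / B_k. *)

Section PNorm.
Context {R : realType} {p : R} (p_gt0 : 0 < p).

Lemma pnorm_ge0 {m} (x : 'rV[R]_m) : 0 <= pnorm p x.
Proof. exact: powR_ge0. Qed.

Lemma pnormN {m} (x : 'rV[R]_m) : pnorm p (- x) = pnorm p x.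
Proof. by rewrite /pnorm; congr (_ `^ _); apply: eq_bigr => i _; rewrite mxE normrN. Qed.

Lemma pnorm0 {m} : pnorm p (0 : 'rV[R]_m) = 0.
Proof.
rewrite /pnorm big1 ?powR0 ?invr_eq0 ?gt_eqF // => i _.
by rewrite mxE normr0 powR0 ?gt_eqF.
Qed.

Let pinv_ge0 : 0 <= p^-1. Proof. by rewrite invr_ge0 ltW. Qed.

Lemma coord_le_pnorm {m} (x : 'rV[R]_m) i : `|x ord0 i| <= pnorm p x.
Proof.
rewrite -[leLHS]powRr1 // -(mulfV (lt0r_neq0 p_gt0)) powRrM.
apply: ge0_ler_powR => //; rewrite ?nnegrE.
- exact: powR_ge0.
- by apply: sumr_ge0 => j _; exact: powR_ge0.
- by rewrite (bigD1 i) //= lerDl sumr_ge0 // => j _; exact: powR_ge0.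
Qed.

Lemma normr_le_pnorm {m} (x : 'rV[R]_m) : `|x| <= pnorm p x.
Proof.
rewrite [`|x|]mx_normrE; apply: bigmax_le => [|[a b] _]; first exact: pnorm_ge0.
by rewrite [a]ord1; exact: coord_le_pnorm.
Qed.

Lemma pnorm_le_normr {m} (x : 'rV[R]_m) (B : R) :
  `|x| <= B -> pnorm p x <= (m%:R * B `^ p) `^ p^-1.
Proof.
move=> xB; have B0 : 0 <= B := le_trans (normr_ge0 x) xB.
apply: ge0_ler_powR => //; rewrite ?nnegrE.
- by apply: sumr_ge0 => i _; exact: powR_ge0.
- by rewrite mulr_ge0 ?powR_ge0.
rewrite -[m in m%:R]card_ord mulr_natl -sumr_const.
apply: ler_sum => i _.
apply: (ge0_ler_powR (ltW p_gt0)); rewrite ?nnegrE //.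
apply: le_trans xB; rewrite [`|x|]mx_normrE.
exact: (le_bigmax _ (fun ij : 'I_1 * 'I_m => `|x ij.1 ij.2|) (ord0, i)).
Qed.
End PNorm.

Lemma compact_dist_gt0 {R : realType} {V : normedModType R} {A : set V} {y : V} :
  compact A -> ~ A y -> exists2 e : R, 0 < e & forall x, A x -> e <= `|y - x|.
Proof.
move=> cA nAy.
have /closed_openC oAC : closed A := compact_closed (@norm_hausdorff _ _) cA.
have /nbhs_ballP[e e0 sub] : nbhs y (~` A) by exact: open_nbhs_nbhs.
exists e => // x Ax; rewrite leNgt; apply/negP => yx.
by apply: (sub x) => //; rewrite -ball_normE.
Qed.

Lemma compact_pnorm_dist_bounds {R : realType} {p : R} {m} {A : set 'rV[R]_m} {y} :
  0 < p -> compact A -> ~ A y ->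
  exists e U : R, [/\ 0 < e, e <= U & forall x, A x -> e <= pnorm p (y - x) <= U].
Proof.
move=> p_gt0 cA nAy.
have [e e0 Ae] := compact_dist_gt0 cA nAy.
have [B [_ AB]] := compact_bounded cA.
exists e, (Num.max e ((m%:R * (`|y| + (B + 1)) `^ p) `^ p^-1)).
split; rewrite ?le_max ?lexx // => x Ax.
rewrite (le_trans (Ae x Ax)) ?normr_le_pnorm //= le_max; apply/orP; right.
apply: pnorm_le_normr => //; rewrite (le_trans (ler_normB _ _)) // lerD2l.
by apply: AB; rewrite ?ltrDl.
Qed.

Section TreeDistance.
Context {R : realType} {p : R} {n d : nat} {z : 'rV[R]_d} (p_gt0 : 0 < p).
Local Notation blank := (blank_tree z).

Lemma Wdist_ge0 (TDx : ftree 'rV[R]_d -> ftree 'rV[R]_d -> R) A B :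
  (forall a b, 0 <= TDx a b) -> 0 <= Wdist n z TDx A B.
Proof.
move=> TDx_ge0; rewrite /Wdist.
by elim/big_ind: _ => [|x y x0 y0|tau _]; rewrite ?le_min ?x0 ?y0 ?sumr_ge0.
Qed.

Lemma Wdist_le_id (TDx : ftree 'rV[R]_d -> ftree 'rV[R]_d -> R) A B :
  Wdist n z TDx A B <= \sum_(j < n) TDx (nth blank A j) (nth blank B j).
Proof.
rewrite /Wdist (bigD1 1%g) //= ge_min; apply/orP; left.
by under eq_bigr => j _ do rewrite perm1.
Qed.

Lemma TDf_ge0 f a b : 0 <= TDf p n z f a b.
Proof.
elim: f a b => [|f IH] a b /=; first exact: pnorm_ge0.
by case: ifP => _; rewrite ?addr_ge0 ?pnorm_ge0 ?Wdist_ge0.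
Qed.

Lemma pnorm_root_le_TDf f a b : pnorm p (root_lbl a - root_lbl b) <= TDf p n z f a b.
Proof.
case: f => [|f] //=.
by case: ifP => _ //; rewrite lerDl Wdist_ge0 // => *; exact: TDf_ge0.
Qed.

Lemma TDf_blank f : TDf p n z f blank blank = 0.
Proof. by case: f => [|f] /=; rewrite subrr pnorm0. Qed.

Lemma TDf_node_blank_le f x ch (M b : R) : 0 <= b -> pnorm p (x - z) <= M ->
  (forall j, (j < size ch)%N -> TDf p n z f (nth blank ch j) blank <= b) ->
  TDf p n z f.+1 (FNode x ch) blank <= M + n%:R * b.
Proof.
move=> b0 xM chb /=; case: ifP => _; last by rewrite ler_wpDr ?mulr_ge0.
rewrite lerD // (le_trans (Wdist_le_id _ _ _)) // -[n in n%:R]card_ord mulr_natl.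
rewrite -sumr_const; apply: ler_sum => j _; rewrite nth_nil.
have [j_lt|j_ge] := ltnP j (size ch); first exact: chb.
by rewrite nth_default // TDf_blank.
Qed.

End TreeDistance.

Lemma iter_growS {m} (adj : rel 'I_m) k v :
  iter k.+1 (grow adj) (FNode v [::]) =
  FNode v [seq iter k (grow adj) (FNode u [::]) | u <- nbrs adj v].
Proof.
elim: k v => [|k IH] v //; rewrite iterS IH.
by case E: (nbrs adj v) => [|u l] /=; rewrite ?E // -map_comp.
Qed.

Lemma comp_treeS {m d T} (adj : rel 'I_m) (X : 'I_m -> 'rV[T]_d) k v :
  comp_tree adj X k.+1 v = FNode (X v) [seq comp_tree adj X k u | u <- nbrs adj v].
Proof. by rewrite /comp_tree iter_growS /=; congr FNode; elim: (nbrs adj v) => //= u l ->. Qed.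

Lemma root_comp_tree {m d T} (adj : rel 'I_m) (X : 'I_m -> 'rV[T]_d) k v :
  root_lbl (comp_tree adj X k v) = X v.
Proof. by case: k => [|k] //; rewrite comp_treeS. Qed.

Definition tree_dist_bound {R : realType} (M : R) n k : R :=
  iter k (fun b => M + n%:R * b) M.

Lemma tree_dist_bound_ge {R : realType} {M : R} n k :
  0 <= M -> M <= tree_dist_bound M n k.
Proof.
move=> M0; elim: k => [|k IH] //=.
by rewrite lerDl mulr_ge0 // (le_trans M0).
Qed.

Lemma TDf_comp_tree_le {R : realType} {p : R} n {m d} {z : 'rV[R]_d} (adj : rel 'I_m)
    {X : 'I_m -> 'rV[R]_d} {M : R} :
  0 < p -> (forall v, pnorm p (X v - z) <= M) ->
  forall k v f, TDf p n z f (comp_tree adj X k v) (blank_tree z) <= tree_dist_bound M n k.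
Proof.
move=> p_gt0 XM; have M0 v : 0 <= M := le_trans (pnorm_ge0 _) (XM v).
elim=> [|k IH] v [|f]; rewrite ?comp_treeS; try exact: XM.
- exact: le_trans (XM v) (tree_dist_bound_ge _ _ (M0 v)).
- apply: TDf_node_blank_le => //.
    exact: le_trans (M0 v) (tree_dist_bound_ge _ _ (M0 v)).
  by move=> j; rewrite size_map => j_lt; rewrite (nth_map v).
Qed.

Lemma TD_comp_tree_bounds {R : realType} {p : R} n {m d} {z : 'rV[R]_d} (adj : rel 'I_m)
    {X : 'I_m -> 'rV[R]_d} {e M : R} k v :
  0 < p -> (forall u, e <= pnorm p (z - X u) <= M) ->
  e <= TD p n z (comp_tree adj X k v) (blank_tree z) <= tree_dist_bound M n k.
Proof.
move=> p_gt0 X_dist; apply/andP; split.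
  rewrite (le_trans _ (pnorm_root_le_TDf _ _ _)) // root_comp_tree /= -pnormN opprB.
  by case/andP: (X_dist v).
apply: TDf_comp_tree_le => // u; rewrite -pnormN opprB.
by case/andP: (X_dist u).
Qed.

Section MatrixContinuity.
Context {T U : topologicalType} {m n : nat}.

Lemma mx_coord_continuous i j : continuous (fun M : 'M[T]_(m, n) => M i j).
Proof.
move=> M A /= MA; exists (fun i' j' => if (i' == i) && (j' == j) then A else setT).
  by move=> i' j'; case: ifP => [/andP[/eqP -> /eqP ->]|_] //; exact: filterT.
by move=> N /(_ i j); rewrite !eqxx.
Qed.

Lemma cvg_mx_coord {S : Type} {F : set_system S} {f : S -> 'M[T]_(m, n)} {M : 'M[T]_(m, n)} :
  Filter F -> (forall i j, (fun s => f s i j) @ F --> M i j) -> f @ F --> M.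
Proof.
move=> FF fM A [P MP PA]; apply: (filterS (fun s Ps => PA (f s) Ps)).
by apply: filter_forall => i; apply: filter_forall => j; exact: fM.
Qed.

Lemma continuous_mx {f : U -> 'M[T]_(m, n)} :
  (forall i j, continuous (fun u => f u i j)) -> continuous f.
Proof. by move=> fc u; apply: cvg_mx_coord => i j; exact: fc. Qed.

Lemma continuous_within_mx {A : set U} {f : U -> 'M[T]_(m, n)} :
  (forall i j, {within A, continuous (fun u => f u i j)}) -> {within A, continuous f}.
Proof.
move=> fc; apply/subspace_continuousP => u Au; apply: cvg_mx_coord => i j.
exact: (subspace_continuousP _ _).1 (fc i j) u Au.
Qed.

End MatrixContinuity.

Section WithinContinuity.
Context {S T U : topologicalType} {A : set S}.

Lemma continuous_within_comp {B : set T} {f : S -> T} {g : T -> U} :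
  {within A, continuous f} -> (forall x, A x -> B (f x)) -> {within B, continuous g} ->
  {within A, continuous (g \o f)}.
Proof.
move=> fc fAB gc; apply/subspace_continuousP => x Ax W gW.
have BW := (subspace_continuousP _ g).1 gc (f x) (fAB x Ax) W gW.
have fBW : nbhs x (fun y => A y -> B (f y) -> W (g (f y))) :=
  (subspace_continuousP _ f).1 fc x Ax _ BW.
by apply: filterS fBW => y BWy Ay; exact: BWy Ay (fAB y Ay).
Qed.

Lemma continuous_within_pair {f : S -> T} {g : S -> U} :
  {within A, continuous f} -> {within A, continuous g} ->
  {within A, continuous (fun x => (f x, g x))}.
Proof.
move=> fc gc; apply/subspace_continuousP => x Ax.
have fx := (subspace_continuousP _ f).1 fc x Ax.
have gx := (subspace_continuousP _ g).1 gc x Ax.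
exact: cvg_pair.
Qed.

End WithinContinuity.

Lemma continuous_rowsub {T : topologicalType} {m s d} (f : 'I_s -> 'I_m) :
  continuous (rowsub f : 'M[T]_(m, d) -> 'M[T]_(s, d)).
Proof.
apply: continuous_mx => i j.
have -> : (fun M : 'M[T]_(m, d) => rowsub f M i j) = (fun M => M (f i) j).
  by apply: funext => M; rewrite mxE.
exact: mx_coord_continuous.
Qed.

Lemma continuous_snd_comp {S T U : topologicalType} {g : T -> U} :
  continuous g -> continuous (fun q : S * T => g q.2).
Proof. by move=> gc q; apply: continuous_comp (gc _); exact: cvg_snd. Qed.

Lemma bigcup_compact {T : topologicalType} {I : finType} {P : set I} {F : I -> set T} :
  (forall i, P i -> compact (F i)) -> compact (\bigcup_(i in P) F i).
Proof.
move=> cF; have -> : \bigcup_(i in P) F i = \big[setU/set0]_(i <- enum I | `[< P i >]) F i.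
  rewrite -bigcup_seq_cond; apply: eq_bigcupl; split => i /=.
    by move=> Pi; rewrite mem_enum; exact/asboolP.
  by case/andP => _ /asboolP.
by apply: bigsetU_compact => i /asboolP; exact: cF.
Qed.

Lemma compact_rows_in {R : realType} m {d} {A : set 'rV[R]_d} :
  compact A -> compact [set M : 'M[R]_(m, d) | forall v, A (row v M)].
Proof.
pose of_rows (w : 'rV['rV[R]_d]_m) : 'M[R]_(m, d) := \matrix_(v, j) w ord0 v ord0 j.
move=> cA; have -> : [set M : 'M[R]_(m, d) | forall v, A (row v M)] =
    of_rows @` [set w : 'rV['rV[R]_d]_m | forall v, A (w ord0 v)].
  apply/seteqP; split => [M AM|_ [w Aw <-] v].
    by exists (\row_v row v M); [move=> v; rewrite mxE | apply/matrixP => v j; rewrite !mxE].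
  by have -> : row v (of_rows w) = w ord0 v by apply/rowP => j; rewrite !mxE.
apply: continuous_compact; last by apply: (@rV_compact _ m (fun=> A)).
apply: continuous_subspaceT; apply: continuous_mx => v j.
have -> : (fun w => of_rows w v j) =
    (fun r : 'rV[R]_d => r ord0 j) \o (fun w : 'rV['rV[R]_d]_m => w ord0 v).
  by apply: funext => w; rewrite /= mxE.
by move=> w; apply: continuous_comp; exact: mx_coord_continuous.
Qed.

Section AttainableFeatures.
Context {R : realType} {n K : nat} {dim pd cd : nat -> nat}.
Context {Omega : set 'rV[R]_(dim 0%N)}.
Context {phi : forall k, 'rV[R]_(pd k) -> seq 'rV[R]_(dim k) -> 'rV[R]_(cd k)}.
Context {psi : forall k, 'rV[R]_(pd k) -> 'rV[R]_(dim k) -> 'rV[R]_(cd k) -> 'rV[R]_(dim k.+1)}.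
Context {Theta : forall k, set 'rV[R]_(pd k)}.
Hypothesis Omega_compact : compact Omega.
Hypothesis Theta_compact : forall k, (k < K)%N -> compact (Theta k).
Hypothesis phi_continuous : forall k, (k < K)%N -> forall m, (m <= n)%N ->
  {within Theta k `*` setT,
    continuous (fun q : 'rV[R]_(pd k) * 'M[R]_(m, dim k) => phi k q.1 (rows_of q.2))}.
Hypothesis psi_continuous : forall k, (k < K)%N ->
  {within Theta k `*` setT,
    continuous (fun q : 'rV[R]_(pd k) * ('rV[R]_(dim k) * 'rV[R]_(cd k)) =>
                  psi k q.1 q.2.1 q.2.2)}.

Local Notation feat := (feat phi psi).

Lemma eq_feat_params {m} {adj : rel 'I_m} {X k} {th th' : forall j, 'rV[R]_(pd j)} :
  (forall j, (j < k)%N -> th j = th' j) -> feat th adj X k =1 feat th' adj X k.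
Proof.
elim: k => [|k IH] thE v //=.
have -> : feat th adj X k = feat th' adj X k.
  by apply: funext; apply: IH => j /ltnW; exact: thE.
by rewrite thE.
Qed.

Lemma eq_feat_adj {m} {adj adj' : rel 'I_m} {X k} {th : forall j, 'rV[R]_(pd j)} :
  adj =2 adj' -> feat th adj X k =1 feat th adj' X k.
Proof.
move=> adjE; have nbrsE v : nbrs adj v = nbrs adj' v by apply: eq_filter => u; exact: adjE.
elim: k => [|k IH] v //=.
have -> : feat th adj X k = feat th adj' X k by apply: funext.
by rewrite nbrsE.
Qed.

Definition feat_mx {m} (th : forall j, 'rV[R]_(pd j)) (adj : rel 'I_m) X k : 'M[R]_(m, dim k) :=
  \matrix_(v < m) feat th adj X k v.

Definition attainable_mx {m} (adj : rel 'I_m) k : set 'M[R]_(m, dim k) :=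
  [set feat_mx th adj X k | X in [set X | forall v, Omega (X v)] &
     th in [set th | params_ok K Theta th]].

Lemma attainable_mx0 {m} (adj : rel 'I_m) {th0 : forall j, 'rV[R]_(pd j)} :
  params_ok K Theta th0 ->
  attainable_mx adj 0 = [set M : 'M[R]_(m, dim 0%N) | forall v, Omega (row v M)].
Proof.
move=> th0_ok; apply/seteqP; split => [_ [X XO [th _ <-]] v|M MO]; first by rewrite rowK.
exists (fun v => row v M) => //; exists th0 => //.
by apply/row_matrixP => v; rewrite rowK.
Qed.

Definition nbr_mx {m} (adj : rel 'I_m) v {d} (M : 'M[R]_(m, d)) : 'M[R]_(size (nbrs adj v), d) :=
  rowsub (fun i => nth v (nbrs adj v) i) M.

Definition layer_mx {m} (adj : rel 'I_m) k (q : 'rV[R]_(pd k) * 'M[R]_(m, dim k)) :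
    'M[R]_(m, dim k.+1) :=
  \matrix_(v < m) psi k q.1 (row v q.2) (phi k q.1 (rows_of (nbr_mx adj v q.2))).

Lemma rows_nbr_mx {m} (adj : rel 'I_m) {d} (F : 'I_m -> 'rV[R]_d) v :
  rows_of (nbr_mx adj v (\matrix_(u < m) F u)) = map F (nbrs adj v).
Proof.
rewrite /rows_of; under eq_map => i do rewrite row_rowsub rowK.
by rewrite -[in RHS](mkseq_nth v (nbrs adj v)) /mkseq -val_enum_ord -!map_comp.
Qed.

Lemma layer_mx_feat {m} (adj : rel 'I_m) X k (th : forall j, 'rV[R]_(pd j)) :
  layer_mx adj k (th k, feat_mx th adj X k) = feat_mx th adj X k.+1.
Proof. by apply/row_matrixP => v; rewrite !rowK /= rows_nbr_mx. Qed.

Lemma attainable_mxS {m} (adj : rel 'I_m) k : (k < K)%N ->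
  attainable_mx adj k.+1 = layer_mx adj k @` (Theta k `*` attainable_mx adj k).
Proof.
move=> lt_kK; apply/seteqP; split => [_ [X XO [th th_ok <-]]|].
  exists (th k, feat_mx th adj X k); last exact: layer_mx_feat.
  by split; [exact: th_ok | exists X => //; exists th].
move=> _ [[t _] [/= Tt [X XO [th th_ok <-]]] <-].
(* Setting the layer-k parameter to [t] does not change the features of layers [<= k]. *)
pose th' := @dfwith nat (fun j => 'rV[R]_(pd j)) th k t.
have th'_k : th' k = t by rewrite /th' dfwithin.
exists X => //; exists th'.
  move=> j lt_jK; have [<-|ne_kj] := eqVneq k j; first by rewrite th'_k.
  by rewrite /th' dfwithout //; exact: th_ok.
rewrite -layer_mx_feat th'_k; congr (layer_mx adj k (t, _)).
apply/row_matrixP => v; rewrite !rowK; apply: eq_feat_params => j lt_jk.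
by rewrite /th' dfwithout // gtn_eqF.
Qed.

Lemma layer_mx_continuous {m} (adj : rel 'I_m) k : (m <= n)%N -> (k < K)%N ->
  {within Theta k `*` setT, continuous (layer_mx adj k)}.
Proof.
move=> le_mn lt_kK; apply: continuous_within_mx => v j.
have size_nbrs : (size (nbrs adj v) <= n)%N.
  by rewrite (leq_trans _ le_mn) // size_filter (leq_trans (count_size _ _)) ?size_enum_ord.
have sub_setT (q : 'rV[R]_(pd k) * 'M[R]_(m, dim k)) :
    (Theta k `*` setT) q -> (Theta k `*` setT) (q.1, nbr_mx adj v q.2) by case.
have fst_c : continuous (fun q : 'rV[R]_(pd k) * 'M[R]_(m, dim k) => q.1).
  by move=> q; exact: cvg_fst.
have row_c : continuous (fun q : 'rV[R]_(pd k) * 'M[R]_(m, dim k) => row v q.2).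
  exact: continuous_snd_comp (continuous_rowsub _).
have phi_c := continuous_within_comp
  (continuous_within_pair (continuous_subspaceT fst_c)
     (continuous_subspaceT (continuous_snd_comp (continuous_rowsub _))))
  sub_setT (phi_continuous k lt_kK _ size_nbrs).
have args_c := continuous_within_pair (continuous_subspaceT fst_c)
  (continuous_within_pair (continuous_subspaceT row_c) phi_c).
have psi_c := continuous_within_comp args_c
  (fun q (Tq : (Theta k `*` setT) q) => conj Tq.1 I) (psi_continuous k lt_kK).
have -> : (fun q => layer_mx adj k q v j) =
    (fun r : 'rV[R]_(dim k.+1) => r ord0 j) \o
    ((fun q : 'rV[R]_(pd k) * ('rV[R]_(dim k) * 'rV[R]_(cd k)) => psi k q.1 q.2.1 q.2.2) \o
     (fun q => (q.1, (row v q.2, phi k q.1 (rows_of (nbr_mx adj v q.2)))))).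
  by apply: funext => q; rewrite mxE.
apply: (continuous_within_comp psi_c (B := setT)) => //.
exact/continuous_subspaceT/mx_coord_continuous.
Qed.

Lemma compact_attainable_mx {m} (adj : rel 'I_m) (th0 : forall j, 'rV[R]_(pd j)) :
  params_ok K Theta th0 -> (m <= n)%N ->
  forall k, (k <= K)%N -> compact (attainable_mx adj k).
Proof.
move=> th0_ok le_mn; elim=> [_|k IH lt_kK].
  by rewrite (attainable_mx0 _ th0_ok); exact: compact_rows_in.
rewrite attainable_mxS //; apply: continuous_compact.
  apply: (@continuous_subspaceW _ _ _ (Theta k `*` setT)); first by move=> q [].
  exact: layer_mx_continuous.
by apply: compact_setX; [exact: Theta_compact | exact/IH/ltnW].
Qed.

Definition simple_graph m : set {ffun 'I_m * 'I_m -> bool} :=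
  [set g | (forall u w, g (u, w) = g (w, u)) /\ forall u, ~~ g (u, u)].

Definition graph_rel {m} (g : {ffun 'I_m * 'I_m -> bool}) : rel 'I_m := fun u w => g (u, w).

Lemma attainable_bigcup k :
  attainable n K Omega phi psi Theta k =
  \bigcup_(m : 'I_n.+1) \bigcup_(g in simple_graph m) \bigcup_(v : 'I_m)
    (row v @` attainable_mx (graph_rel g) k).
Proof.
apply/seteqP; split=> [_ [m [adj [X [v [th [[le_mn adjC adjI XO] th_ok ->]]]]]]|].
  pose g := [ffun uw : 'I_m * 'I_m => adj uw.1 uw.2].
  have adjE : graph_rel g =2 adj by move=> u w; rewrite /graph_rel ffunE.
  exists (Ordinal (le_mn : (m < n.+1)%N)) => //=; exists g.
    by split => [u w|u]; rewrite !ffunE /=; [exact: adjC | exact: adjI].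
  exists v => //; exists (feat_mx th (graph_rel g) X k); last by rewrite rowK (eq_feat_adj adjE).
  by exists X => //; exists th.
move=> _ [m _ [g [gC gI] [v _ [_ [X XO [th th_ok <-]] <-]]]].
exists m, (graph_rel g), X, v, th; split; rewrite ?rowK //.
by split => [|u w|u|]; [rewrite -ltnS | exact: gC | exact: gI | exact: XO].
Qed.

Lemma compact_attainable {k} : (k <= K)%N -> compact (attainable n K Omega phi psi Theta k).
Proof.
move=> le_kK; have [[th0 th0_ok]|no_params] := pselect (exists th, params_ok K Theta th).
  rewrite attainable_bigcup; apply: bigcup_compact => m _.
  apply: bigcup_compact => g _; apply: bigcup_compact => v _.
  apply: continuous_compact; first by apply: continuous_subspaceT; exact: continuous_rowsub.
  exact: compact_attainable_mx th0_ok (ltn_ord m : (m <= n)%N) k le_kK.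
suff -> : attainable n K Omega phi psi Theta k = set0 by exact: compact0.
by apply/seteqP; split => // x [m [adj [X [v [th [_ th_ok _]]]]]]; apply: no_params; exists th.
Qed.

End AttainableFeatures.

Theorem mainTheorem11 (R : realType) (p : R) (n K : nat)
  (dim pd cd : nat -> nat)
  (Omega : set 'rV[R]_(dim 0%N)) (z : 'rV[R]_(dim 0%N))
  (phi : forall k, 'rV[R]_(pd k) -> seq 'rV[R]_(dim k) -> 'rV[R]_(cd k))
  (psi : forall k, 'rV[R]_(pd k) -> 'rV[R]_(dim k) -> 'rV[R]_(cd k) -> 'rV[R]_(dim k.+1))
  (Theta : forall k, set 'rV[R]_(pd k))
  (pr dout : nat) (ups : 'rV[R]_pr -> seq 'rV[R]_(dim K) -> 'rV[R]_dout)
  (Theta_r : set 'rV[R]_pr) :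
  1 <= p ->
  compact Omega ->
  ~ Omega z ->
  (forall k, (k < K)%N -> compact (Theta k)) ->
  compact Theta_r ->
  (forall k, (k < K)%N -> multiset_fun (phi k)) ->
  (forall k, (k < K)%N -> forall m, (m <= n)%N ->
     {within Theta k `*` setT,
       continuous (fun q : 'rV[R]_(pd k) * 'M[R]_(m, dim k) => phi k q.1 (rows_of q.2))}) ->
  (forall k, (k < K)%N ->
     {within Theta k `*` setT,
       continuous (fun q : 'rV[R]_(pd k) * ('rV[R]_(dim k) * 'rV[R]_(cd k)) =>
                     psi k q.1 q.2.1 q.2.2)}) ->
  multiset_fun ups ->
  (forall m, (m <= n)%N ->
     {within Theta_r `*` setT,
       continuous (fun q : 'rV[R]_pr * 'M[R]_(m, dim K) => ups q.1 (rows_of q.2))}) ->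
  forall k, (k <= K)%N ->
  forall zk : 'rV[R]_(dim k),
  ~ attainable n K Omega phi psi Theta k zk ->
  exists C c : R, [/\ 0 < c, c <= C &
    forall (m : nat) (adj : rel 'I_m) (X : 'I_m -> 'rV[R]_(dim 0%N)) (v : 'I_m)
           (theta : forall j, 'rV[R]_(pd j)),
      graph_ok n Omega adj X -> params_ok K Theta theta ->
      C * TD p n z (comp_tree adj X k v) (blank_tree z)
        >= pnorm p (zk - feat phi psi theta adj X k v)
      /\ pnorm p (zk - feat phi psi theta adj X k v)
        >= c * TD p n z (comp_tree adj X k v) (blank_tree z)].
Proof.
move=> p_ge1 Omega_c z_notin Theta_c _ _ phi_c psi_c _ _ k le_kK zk zk_notin.
have p_gt0 : 0 < p := lt_le_trans ltr01 p_ge1.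
have [e1 [U1 [e1_gt0 e1_U1 zk_dist]]] := compact_pnorm_dist_bounds p_gt0
  (compact_attainable Omega_c Theta_c phi_c psi_c le_kK) zk_notin.
have [e2 [U2 [e2_gt0 e2_U2 z_dist]]] := compact_pnorm_dist_bounds p_gt0 Omega_c z_notin.
pose B := tree_dist_bound U2 n k.
have e2_B : e2 <= B := le_trans e2_U2 (tree_dist_bound_ge n k (le_trans (ltW e2_gt0) e2_U2)).
have B_gt0 : 0 < B := lt_le_trans e2_gt0 e2_B.
exists (U1 / e2), (e1 / B); split; first exact: divr_gt0.
  by apply: ler_pM; rewrite ?invr_ge0 ?(ltW e1_gt0) ?(ltW B_gt0) // lef_pV2 ?posrE.
move=> m adj X v th G_ok th_ok.
have /andP[feat_lo feat_hi] : e1 <= pnorm p (zk - feat phi psi th adj X k v) <= U1.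
  by apply: zk_dist; exists m, adj, X, v, th.
have X_dist u : e2 <= pnorm p (z - X u) <= U2 by case: G_ok => _ _ _ XO; exact: z_dist.
have /andP[td_lo td_hi] := TD_comp_tree_bounds n adj k v p_gt0 X_dist.
split.
- rewrite (le_trans feat_hi) // mulrAC ler_pdivlMr //.
  by rewrite ler_wpM2l // (le_trans (ltW e1_gt0)).
- rewrite (le_trans _ feat_lo) // mulrAC ler_pdivrMr //.
  by rewrite ler_wpM2l // ltW.
Qed.
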